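(* There exists a function $f:\mathbb{N}\times\mathbb{N}\to\mathbb{N}$ such that for every $m\in\mathbb{N}$, every $x\in\mathbb{R}^m$ with $|\mathrm{set}(x)|\le r$, and every $\ell\in\mathbb{N}$, there exists $y\in\mathbb{R}^{f(r,\ell)}$ with $D_{(y,\ell)}=D_{(x,\ell)}$ and $\mathrm{set}(x)=\mathrm{set}(y)$, and in particular $d_{dF}(x,q)=d_{dF}(y,q)$ for every $q\in\mathbb{R}^\ell$.
   Context: A time series of complexity $m$ is a vector in $\mathbb{R}^m$; $\mathrm{set}(x)$ is the set of entries of $x$, and $\mathrm{rank}_x(z)$ is the rank of $z\in\mathrm{set}(x)$ in $\mathrm{set}(x)$ (ordered increasingly). For $x\in\mathbb{R}^m$ and $y\in\mathbb{R}^\ell$, a traversal is a sequence of index pairs $(i,j)\in[m]\times[\ell]$ starting at $(1,1)$, ending at $(m,\ell)$, in which each pair $(i,j)$ is followed by one of $(i,j+1)$, $(i+1,j)$, $(i+1,j+1)$; $x_i$ and $y_j$ are matched if $(i,j)$ occurs in it. The discrete Fréchet distance $d_{dF}(x,y)$ is the minimum over all traversals $T$ of $\max_{(i,j)\in T}|x_i-y_j|$. For a traversal $M$ of $x$ with a time series of complexity $\ell$, the traversal sectors are $S^{(x,M)}_j=\{x_i: x_i \text{ matched with the } j\text{-th vertex by } M\}$, $j\in[\ell]$, and the $\ell$-profile of $(x,M)$ is $\big((\mathrm{rank}_x(\min S^{(x,M)}_j),\mathrm{rank}_x(\max S^{(x,M)}_j))\big)_{j=1}^{\ell}$. $D_{(x,\ell)}$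 is the set of all $\ell$-profiles of $(x,M)$ over all such traversals $M$. *)

From HB Require Import structures.
From Stdlib Require Import Rdefinitions.
From mathcomp Require Import all_boot all_order all_algebra.
From mathcomp Require Import Rstruct.
Set Implicit Arguments. Unset Strict Implicit. Unset Printing Implicit Defensive.
Import Order.TTheory GRing.Theory Num.Theory.
Local Open Scope ring_scope.

(* Indices are 0-based: index i in the paper is i.-1 here. A time series of
   complexity m is an m.-tuple R; x_i is nth 0 x i. *)

Definition tset (x : seq R) : seq R := undup x.

(* rank_x(z): rank of z in set(x) ordered increasingly (1-based):
   the number of elements of set(x) that are <= z. *)
Definition rank (x : seq R) (z : R) : nat := count (fun w => w <= z) (tset x).

Definition trav_step (p p' : nat * nat) : bool :=
  [|| p' == (p.1, p.2.+1), p' == (p.1.+1, p.2) | p' == (p.1.+1, p.2.+1)].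

Definition traversal (m l : nat) (M : seq (nat * nat)) : Prop :=
  exists T : seq (nat * nat),
    M = (0%N, 0%N) :: T /\ path trav_step (0%N, 0%N) T /\
    last (0%N, 0%N) T = (m.-1, l.-1).

Definition xval (x : seq R) (i : nat) : R := nth 0 x i.

Definition sector (x : seq R) (M : seq (nat * nat)) (j : nat) : seq R :=
  [seq xval x p.1 | p <- M & p.2 == j].

Definition smin (s : seq R) : R := foldr Num.min (head 0 s) s.
Definition smax (s : seq R) : R := foldr Num.max (head 0 s) s.

Definition profile (x : seq R) (l : nat) (M : seq (nat * nat)) : seq (nat * nat) :=
  [seq (rank x (smin (sector x M j)), rank x (smax (sector x M j))) | j <- iota 0 l].

Definition profiles (x : seq R) (l : nat) : seq (nat * nat) -> Prop :=
  fun P => exists M, traversal (size x) l M /\ P = profile x l M.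

Definition trav_cost (x y : seq R) (M : seq (nat * nat)) : R :=
  foldr Num.max 0 [seq `|xval x p.1 - xval y p.2| | p <- M].

Definition is_dF (x y : seq R) (d : R) : Prop :=
  (exists M, traversal (size x) (size y) M /\ trav_cost x y M = d) /\
  (forall M, traversal (size x) (size y) M -> d <= trav_cost x y M).

From Stdlib Require Import Rdefinitions.
From mathcomp Require Import all_boot all_order all_algebra.
From mathcomp Require Import Rstruct lra boolp.
Import Order.TTheory GRing.Theory Num.Theory.
Set Implicit Arguments. Unset Strict Implicit.

(* The l-profiles of x depend on x only through its rank code (rank_x(x_i))_i,
   a word over {1, ..., r}.  The l-profiles of a code together with its set of
   letters form a finite datum (its key), so some N = f(r, l) bounds, for every
   key realized at all, the length of a shortest code realizing it.  Repeating
   the first letter of a code changes neither its profiles nor its letters, so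
   the short code can be padded to length exactly N; decoding it through the
   sorted set(x) gives y.  Finally, the cost of a traversal of x with q depends
   only on the minima and maxima of the sectors, which the profile and set(x)
   determine, so d_dF(x, q) = d_dF(y, q). *)

Section SeqExtrema.
Context {disp : Order.disp_t} {T : orderType disp}.
Implicit Types (d : T) (s : seq T).

Definition seq_min d s := foldr Order.min (head d s) s.
Definition seq_max d s := foldr Order.max (head d s) s.

Lemma seq_min_mem d s : s != [::] -> seq_min d s \in s.
Proof.
case: s => // a s _; rewrite /seq_min foldrE big_seq.
apply: (big_ind (fun v => v \in a :: s)) => [|u v|u]; rewrite ?mem_head //.
by rewrite minEle; case: ifP.
Qed.

Lemma seq_max_mem d s : s != [::] -> seq_max d s \in s.
Proof.
case: s => // a s _; rewrite /seq_max foldrE big_seq.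
apply: (big_ind (fun v => v \in a :: s)) => [|u v|u]; rewrite ?mem_head //.
by rewrite maxEle; case: ifP.
Qed.

Lemma seq_min_le d s z : z \in s -> (seq_min d s <= z)%O.
Proof. by case: s => // a s zs; rewrite /seq_min foldrE ge_bigmin_seq. Qed.

Lemma seq_max_ge d s z : z \in s -> (z <= seq_max d s)%O.
Proof. by case: s => // a s zs; rewrite /seq_max foldrE le_bigmax_seq. Qed.

Lemma foldr_max_le d s b : (foldr Order.max d s <= b)%O = (d <= b)%O && all (<= b)%O s.
Proof. by elim: s => [|c s IH] /=; rewrite ?andbT // ge_max IH andbCA. Qed.

Lemma eq_seq_min d d' s s' : s != [::] -> s =i s' -> seq_min d s = seq_min d' s'.
Proof.
move=> s_neq0 eq_ss'; have s'_neq0 : s' != [::].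
  by case: s' eq_ss' => // /(_ (head d s)); case: s s_neq0 => // a s _; rewrite mem_head.
apply/le_anti/andP; split; apply: seq_min_le.
  by rewrite eq_ss' seq_min_mem.
by rewrite -eq_ss' seq_min_mem.
Qed.

Lemma eq_seq_max d d' s s' : s != [::] -> s =i s' -> seq_max d s = seq_max d' s'.
Proof.
move=> s_neq0 eq_ss'; have s'_neq0 : s' != [::].
  by case: s' eq_ss' => // /(_ (head d s)); case: s s_neq0 => // a s _; rewrite mem_head.
apply/le_anti/andP; split; apply: seq_max_ge.
  by rewrite -eq_ss' seq_max_mem.
by rewrite eq_ss' seq_max_mem.
Qed.

End SeqExtrema.

Section HomoSeqExtrema.
Context {disp disp' : Order.disp_t} {T : orderType disp} {T' : orderType disp'}.
Variable f : T -> T'.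
Hypothesis f_homo : {homo f : u v / (u <= v)%O}.

Lemma homo_seq_min (d : T) (d' : T') s : s != [::] -> f (seq_min d s) = seq_min d' (map f s).
Proof.
move=> s_neq0; have fs_neq0 : map f s != [::] by case: s s_neq0.
apply: le_anti; rewrite seq_min_le ?map_f ?seq_min_mem //=.
by have /mapP[z zs ->] := seq_min_mem d' fs_neq0; rewrite f_homo ?seq_min_le.
Qed.

Lemma homo_seq_max (d : T) (d' : T') s : s != [::] -> f (seq_max d s) = seq_max d' (map f s).
Proof.
move=> s_neq0; have fs_neq0 : map f s != [::] by case: s s_neq0.
apply: le_anti; rewrite seq_max_ge ?map_f ?seq_max_mem //=.
by have /mapP[z zs ->] := seq_max_mem d' fs_neq0; rewrite f_homo ?seq_max_ge.
Qed.

End HomoSeqExtrema.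

Section Traversals.
Implicit Types (p : nat * nat) (T : seq (nat * nat)).

Lemma trav_step_bounds p p' : trav_step p p' ->
  [/\ p.1 <= p'.1 <= p.1.+1 & p.2 <= p'.2 <= p.2.+1].
Proof.
case: p p' => a b [c d]; rewrite /trav_step /= !xpair_eqE.
by case/or3P => /andP[/eqP-> /eqP->]; rewrite !leqnn ?leqnSn.
Qed.

Lemma path_trav_step_le_last p0 T p : path trav_step p0 T -> p \in p0 :: T ->
  p.1 <= (last p0 T).1 /\ p.2 <= (last p0 T).2.
Proof.
elim: T p0 p => [|p1 T IH] p0 p /=; first by move=> _; rewrite inE => /eqP->.
move=> /andP[step01 path1]; rewrite inE => /predU1P[->|]; last exact: IH.
have [/andP[le1 _] /andP[le2 _]] := trav_step_bounds step01.
have [k1 k2] := IH p1 p1 path1 (mem_head _ _).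
by split; [apply: leq_trans k1|apply: leq_trans k2].
Qed.

Lemma path_trav_step_cover p0 T j : path trav_step p0 T ->
  p0.2 <= j <= (last p0 T).2 -> exists i, (i, j) \in p0 :: T.
Proof.
elim: T p0 => [|p1 T IH] p0 /=.
  by move=> _; rewrite -eqn_leq => /eqP <-; exists p0.1; rewrite -surjective_pairing mem_head.
move=> /andP[step01 path1] /andP[le0j lejl].
have [->|ne0j] := eqVneq j p0.2; first by exists p0.1; rewrite -surjective_pairing mem_head.
have [_ /andP[_ le12]] := trav_step_bounds step01.
have [|i iT] := IH p1 path1; last by exists i; rewrite inE iT orbT.
by rewrite lejl andbT (leq_trans le12) // ltn_neqAle eq_sym ne0j.
Qed.

Lemma traversal_bound m l M p : traversal m l M -> 0 < m -> 0 < l ->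
  p \in M -> p.1 < m /\ p.2 < l.
Proof.
move=> [T [-> [pathT lastT]]] m_gt0 l_gt0 pM.
have [] := path_trav_step_le_last pathT pM; rewrite lastT /=.
by rewrite -ltnS prednK // -[_ <= l.-1]ltnS prednK.
Qed.

Lemma traversal_cover m l M j : traversal m l M -> j < l -> exists i, (i, j) \in M.
Proof.
move=> [T [-> [pathT lastT]]] jl; apply: path_trav_step_cover => //=.
by rewrite lastT -ltnS (leq_trans jl) // leqSpred.
Qed.

Definition trav_wstep p p' := (p' == p) || trav_step p p'.

Lemma path_trav_wstep_compress p0 T : path trav_wstep p0 T -> exists T',
  [/\ path trav_step p0 T', last p0 T' = last p0 T & p0 :: T' =i p0 :: T].
Proof.
elim: T p0 => [|p1 T IH] p0 /=; first by exists [::].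
move=> /andP[/orP[/eqP-> | step01] /IH[T' [pathT' lastT' memT']]].
  by exists T'; split => // z; rewrite memT' !inE orbA orbb.
exists (p1 :: T'); split => [|//|z] /=; first by rewrite step01.
by move: (memT' z); rewrite !inE => ->.
Qed.

Lemma traversal_of_path_trav_wstep m l T : path trav_wstep (0, 0) T ->
  last (0, 0) T = (m.-1, l.-1) -> exists2 M, traversal m l M & M =i (0, 0) :: T.
Proof.
move=> /path_trav_wstep_compress[T' [pathT' lastT' memT']] lastT.
by exists ((0, 0) :: T') => //; exists T'; rewrite lastT'.
Qed.

Definition shift p := (p.1.+1, p.2).
Definition unshift p := (p.1.-1, p.2).

Lemma path_shift p0 T : path trav_step p0 T -> path trav_step (shift p0) (map shift T).
Proof.
elim: T p0 => [//|p1 T IH] p0 /= /andP[step01 /IH ->]; rewrite andbT.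
by move: step01; case: p0 p1 => a b [c d]; rewrite /trav_step /shift /= !xpair_eqE !eqSS.
Qed.

Lemma path_unshift p0 T : path trav_step p0 T -> path trav_wstep (unshift p0) (map unshift T).
Proof.
elim: T p0 => [//|p1 T IH] p0 /= /andP[step01 /IH ->]; rewrite andbT.
move: step01; case: p0 p1 => a b [c d]; rewrite /trav_step /trav_wstep /unshift /= !xpair_eqE.
case/or3P => /andP[/eqP-> /eqP->];
  by case: a => [|a]; rewrite /trav_step /= !xpair_eqE ?eqxx ?orbT.
Qed.

End Traversals.

Section Sectors.
Context {T : eqType}.
Implicit Types (d : T) (s : seq T) (M : seq (nat * nat)).

Definition seq_sector d s M j := [seq nth d s p.1 | p <- M & p.2 == j].

Lemma seq_sectorP d s M j z :
  reflect (exists2 p, p \in M & (p.2 == j) && (z == nth d s p.1)) (z \in seq_sector d s M j).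
Proof.
apply: (iffP mapP) => [[p]|[p pM /andP[/eqP pj /eqP ->]]].
  by rewrite mem_filter => /andP[pj pM] ->; exists p; rewrite ?pj ?eqxx.
by exists p; rewrite // mem_filter pj eqxx.
Qed.

Lemma seq_sector_neq0 d s l M j : traversal (size s) l M -> j < l ->
  seq_sector d s M j != [::].
Proof.
move=> trM /(traversal_cover trM)[i ijM]; apply/eqP => sector0.
have /seq_sectorP : nth d s i \notin seq_sector d s M j by rewrite sector0.
by apply; exists (i, j); rewrite /= ?eqxx.
Qed.

End Sectors.

Section RankCodes.
Implicit Types (w : seq nat) (M : seq (nat * nat)).

Definition code_profile w l M :=
  [seq (seq_min 0 (seq_sector 0 w M j), seq_max 0 (seq_sector 0 w M j)) | j <- iota 0 l].

Definition code_profiles w l P := exists M, traversal (size w) l M /\ P = code_profile w l M.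

Lemma eq_code_profile w1 w2 l M1 M2 : traversal (size w1) l M1 ->
  (forall j, j < l -> seq_sector 0 w1 M1 j =i seq_sector 0 w2 M2 j) ->
  code_profile w1 l M1 = code_profile w2 l M2.
Proof.
move=> trM1 eq_sector; apply/eq_in_map => j; rewrite mem_iota add0n => /= jl.
have sector_neq0 := seq_sector_neq0 0 trM1 jl.
by rewrite (eq_seq_min 0 0 sector_neq0 (eq_sector j jl))
  (eq_seq_max 0 0 sector_neq0 (eq_sector j jl)).
Qed.

Section ConsHead.
Variables (w : seq nat) (l : nat).
Hypothesis w_gt0 : 0 < size w.
Let v := head 0 w.

Let nth_cons_head i : nth 0 (v :: w) i = nth 0 w i.-1.
Proof. by case: i => [|i] //; rewrite /v; case: (w). Qed.

Lemma code_profile_shift M : traversal (size w) l M ->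
  traversal (size w).+1 l ((0, 0) :: map shift M) /\
  code_profile (v :: w) l ((0, 0) :: map shift M) = code_profile w l M.
Proof.
move=> trM; have [T [M_def [pathT lastT]]] := trM.
have trM' : traversal (size w).+1 l ((0, 0) :: map shift M).
  exists (map shift M); split => //; split; first by rewrite M_def /= path_shift.
  by rewrite M_def /= last_map lastT /shift /= prednK.
split => //; apply: eq_code_profile => // j jl z.
apply/seq_sectorP/seq_sectorP => [[p]|[p pM /andP[pj /eqP ->]]]; last first.
  by exists (shift p); rewrite ?inE ?map_f ?orbT //= pj ?eqxx.
rewrite inE => /predU1P[->|/mapP[q qM ->]] /andP[pj /eqP ->].
  by exists (0, 0); rewrite ?M_def ?mem_head //= pj ?eqxx.
by exists q; rewrite ?pj ?eqxx.
Qed.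

Lemma code_profile_unshift M' : traversal (size w).+1 l M' ->
  exists2 M, traversal (size w) l M & code_profile w l M = code_profile (v :: w) l M'.
Proof.
move=> trM'; have [T' [M'_def [pathT' lastT']]] := trM'.
have [|M trM memM] := @traversal_of_path_trav_wstep (size w) l _ (path_unshift pathT').
  by rewrite -/(unshift (0, 0)) last_map lastT'.
have {}memM : M =i map unshift M' by move=> p; rewrite memM M'_def.
exists M => //; apply: eq_code_profile => // j jl z.
apply/seq_sectorP/seq_sectorP => [[p]|[p pM' /andP[pj /eqP ->]]].
  rewrite memM => /mapP[q qM' ->] /andP[qj /eqP ->].
  by exists q; rewrite // qj nth_cons_head ?eqxx.
by exists (unshift p); rewrite ?memM ?map_f //= pj nth_cons_head ?eqxx.
Qed.

Lemma code_profiles_cons_head P : code_profiles (v :: w) l P <-> code_profiles w l P.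
Proof.
split => -[M [trM ->]].
  by have [M0 trM0 <-] := code_profile_unshift trM; exists M0.
by have [trM' <-] := code_profile_shift trM; exists ((0, 0) :: map shift M).
Qed.

End ConsHead.
End RankCodes.

Section Ranks.
Local Open Scope ring_scope.
Implicit Types (x y : seq R) (z : R) (w : seq nat).

Definition sorted_tset x := sort <=%O (tset x).

Definition rank_code x := map (rank x) x.

(* [rank] is 1-based, hence [k.-1]. *)
Definition decode x w := [seq nth 0 (sorted_tset x) k.-1 | k <- w].

Lemma rank_homo x : {homo rank x : u v / u <= v >-> (u <= v)%N}.
Proof. by move=> u v uv; apply: sub_count => z /= /le_trans; apply. Qed.

Lemma eq_rank x y : tset x =i tset y -> rank x =1 rank y.
Proof. by move=> eq_xy z; apply/permP/uniq_perm; rewrite ?undup_uniq. Qed.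

Lemma mem_sorted_tset x z : (z \in sorted_tset x) = (z \in tset x).
Proof. by rewrite mem_sort. Qed.

Lemma rank_nth_sorted_tset x i : (i < size (sorted_tset x))%N ->
  rank x (nth 0 (sorted_tset x) i) = i.+1.
Proof.
move=> lt_i; set s : seq R := sorted_tset x; set z : R := nth 0 s i.
have s_sorted : sorted <%O s by rewrite sort_lt_sorted undup_uniq.
have s_lt := sorted_ltn_nth lt_trans 0 s_sorted.
have all_take : all (<= z) (take i.+1 s).
  apply/(all_nthP 0) => k; rewrite size_takel // => lt_k; rewrite nth_take //.
  rewrite ltnS leq_eqVlt in lt_k; case/predU1P: lt_k => [->|lt_ki]; first exact: lexx.
  by apply/ltW/s_lt; rewrite // inE (ltn_trans lt_ki).
have has_drop : ~~ has (<= z) (drop i.+1 s).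
  apply/(has_nthP 0) => -[k]; rewrite size_drop ltn_subRL => lt_ks.
  rewrite nth_drop /= lt_geF // s_lt ?inE //.
  by rewrite addSn ltnS leq_addr.
have -> : rank x z = count (<= z) s by apply/permP; rewrite perm_sym perm_sort.
rewrite -(cat_take_drop i.+1 s) count_cat.
move: all_take has_drop; rewrite all_count has_count -leqNgt leqn0 => /eqP-> /eqP->.
by rewrite addn0 size_takel.
Qed.

Lemma rank_index x z : z \in tset x -> rank x z = (index z (sorted_tset x)).+1.
Proof.
rewrite -mem_sorted_tset => z_in.
by rewrite -{1}(nth_index 0 z_in) rank_nth_sorted_tset // index_mem.
Qed.

Lemma rankK x : {in tset x, cancel (rank x) (fun k => nth 0 (sorted_tset x) k.-1)}.
Proof. by move=> z z_in; rewrite rank_index //= nth_index // mem_sorted_tset. Qed.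

Lemma rank_le_size x z : z \in tset x -> (rank x z <= size (tset x))%N.
Proof.
move=> z_in; rewrite rank_index // -(size_sort <=%O) -/(sorted_tset x) index_mem.
by rewrite mem_sorted_tset.
Qed.

Lemma rank_code_le x k : k \in rank_code x -> (k <= size (tset x))%N.
Proof. by case/mapP=> z zx ->; rewrite rank_le_size // mem_undup. Qed.

Lemma sector_rank x l M j : traversal (size x) l M -> (0 < size x)%N -> (0 < l)%N ->
  map (rank x) (sector x M j) = seq_sector 0%N (rank_code x) M j.
Proof.
move=> trM x_gt0 l_gt0; rewrite /sector /seq_sector -map_comp; apply/eq_in_map => p.
rewrite mem_filter => /andP[_ pM]; have [lt_p1 _] := traversal_bound trM x_gt0 l_gt0 pM.
by rewrite /= (nth_map 0).
Qed.

Lemma profile_rank_code x l M : traversal (size x) l M -> (0 < size x)%N -> (0 < l)%N ->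
  profile x l M = code_profile (rank_code x) l M.
Proof.
move=> trM x_gt0 l_gt0; apply/eq_in_map => j; rewrite mem_iota add0n /= => jl.
have trM' : traversal (size (rank_code x)) l M by rewrite size_map.
have sector_neq0 : sector x M j != [::].
  by have := seq_sector_neq0 0%N trM' jl; rewrite -(sector_rank j trM); case: sector.
by rewrite (homo_seq_min (@rank_homo x) 0 0%N sector_neq0)
  (homo_seq_max (@rank_homo x) 0 0%N sector_neq0) (sector_rank j trM).
Qed.

Lemma profiles_rank_code x l P : (0 < size x)%N -> (0 < l)%N ->
  profiles x l P <-> code_profiles (rank_code x) l P.
Proof.
move=> x_gt0 l_gt0; rewrite /profiles /code_profiles size_map.
by split=> -[M [trM ->]]; exists M; rewrite profile_rank_code.
Qed.

Lemma tset_decode x w : w =i rank_code x -> tset (decode x w) =i tset x.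
Proof.
move=> eq_w z; rewrite !mem_undup; apply/mapP/idP => [[k kw ->]|zx].
  have /mapP[z' z'x ->] : k \in rank_code x by rewrite -eq_w.
  by rewrite rankK // mem_undup.
by exists (rank x z); rewrite ?eq_w ?map_f // rankK // mem_undup.
Qed.

Lemma rank_code_decode x w : w =i rank_code x -> rank_code (decode x w) = w.
Proof.
move=> eq_w; rewrite /rank_code /decode -map_comp -[RHS]map_id.
apply/eq_in_map => k kw /=; have /mapP[z zx ->] : k \in rank_code x by rewrite -eq_w.
by rewrite (eq_rank (tset_decode eq_w)) rankK // mem_undup.
Qed.

End Ranks.

Lemma ler_dist_between {F : realDomainType} (a c z t b : F) : (a <= z <= c)%R ->
  (`|a - t| <= b)%R -> (`|c - t| <= b)%R -> (`|z - t| <= b)%R.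
Proof.
rewrite !ler_norml => /andP[az zc] /andP[? ?] /andP[? ?].
by apply/andP; split; lra.
Qed.

Section FrechetDistance.
Local Open Scope ring_scope.
Implicit Types (x y q : seq R) (M : seq (nat * nat)).

Lemma mem_sector_tset x l M j z : traversal (size x) l M -> (0 < size x)%N -> (0 < l)%N ->
  z \in sector x M j -> z \in tset x.
Proof.
move=> trM x_gt0 l_gt0 /seq_sectorP[p pM /andP[_ /eqP ->]].
have [lt_p1 _] := traversal_bound trM x_gt0 l_gt0 pM.
by rewrite mem_undup mem_nth.
Qed.

Lemma trav_cost_ge0 x q M : 0 <= trav_cost x q M.
Proof. by have := lexx (trav_cost x q M); rewrite {2}/trav_cost foldr_max_le => /andP[]. Qed.

Lemma trav_cost_le x q l M b : traversal (size x) l M -> (0 < size x)%N -> (0 < l)%N ->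
  0 <= b ->
  trav_cost x q M <= b <-> forall j, (j < l)%N ->
    `|smin (sector x M j) - xval q j| <= b /\ `|smax (sector x M j) - xval q j| <= b.
Proof.
move=> trM x_gt0 l_gt0 b_ge0; rewrite /trav_cost foldr_max_le b_ge0 all_map; split.
  move=> /allP cost_le j jl; have sector_neq0 := seq_sector_neq0 0 trM jl.
  have sector_le z : z \in sector x M j -> `|z - xval q j| <= b.
    by case/seq_sectorP=> p pM /andP[/eqP <- /eqP ->]; apply: cost_le.
  by split; apply: sector_le; [apply: seq_min_mem | apply: seq_max_mem].
move=> sector_le; apply/allP => p pM /=.
have [_ lt_p2] := traversal_bound trM x_gt0 l_gt0 pM.
have zM : xval x p.1 \in sector x M p.2 by apply/seq_sectorP; exists p; rewrite ?eqxx.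
have [min_le max_le] := sector_le _ lt_p2.
by apply: ler_dist_between min_le max_le; rewrite seq_min_le ?seq_max_ge.
Qed.

Lemma eq_trav_cost x y q l M M' : traversal (size x) l M -> traversal (size y) l M' ->
  (0 < size x)%N -> (0 < size y)%N -> (0 < l)%N ->
  (forall j, (j < l)%N -> smin (sector x M j) = smin (sector y M' j) /\
                         smax (sector x M j) = smax (sector y M' j)) ->
  trav_cost x q M = trav_cost y q M'.
Proof.
move=> trM trM' x_gt0 y_gt0 l_gt0 eq_extrema.
have cost_le b : 0 <= b -> trav_cost x q M <= b <-> trav_cost y q M' <= b.
  move=> b_ge0; rewrite (trav_cost_le q trM x_gt0 l_gt0 b_ge0).
  rewrite (trav_cost_le q trM' y_gt0 l_gt0 b_ge0).
  split=> le_b j jl; have [eq_min eq_max] := eq_extrema j jl.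
    by rewrite -eq_min -eq_max; apply: le_b.
  by rewrite eq_min eq_max; apply: le_b.
by apply/le_anti/andP; split; [apply/cost_le | apply/cost_le]; rewrite ?trav_cost_ge0.
Qed.

Lemma eq_profile_sector_extrema x y l M M' : tset x =i tset y ->
  traversal (size x) l M -> traversal (size y) l M' ->
  (0 < size x)%N -> (0 < size y)%N -> (0 < l)%N ->
  profile x l M = profile y l M' ->
  forall j, (j < l)%N -> smin (sector x M j) = smin (sector y M' j) /\
                         smax (sector x M j) = smax (sector y M' j).
Proof.
move=> eq_xy trM trM' x_gt0 y_gt0 l_gt0 eq_prof j jl.
have := congr1 (nth (0%N, 0%N) ^~ j) eq_prof.
rewrite /profile !(nth_map 0%N) ?size_iota // nth_iota // add0n !(eq_rank eq_xy).
move=> -[eq_min eq_max].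
have sectorM_tset z : z \in sector x M j -> z \in tset y.
  by move/(mem_sector_tset trM x_gt0 l_gt0); rewrite eq_xy.
have sectorM'_tset z : z \in sector y M' j -> z \in tset y.
  exact: mem_sector_tset trM' y_gt0 l_gt0.
have neq0 := seq_sector_neq0 0 trM jl; have neq0' := seq_sector_neq0 0 trM' jl.
split; apply: (can_in_inj (@rankK y)) => //.
- by apply/sectorM_tset/seq_min_mem.
- by apply/sectorM'_tset/seq_min_mem.
- by apply/sectorM_tset/seq_max_mem.
- by apply/sectorM'_tset/seq_max_mem.
Qed.

Lemma is_dF_transfer x y q l d : size q = l ->
  (0 < size x)%N -> (0 < size y)%N -> (0 < l)%N -> tset x =i tset y ->
  (forall P, profiles y l P <-> profiles x l P) -> is_dF x q d -> is_dF y q d.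
Proof.
move=> ql x_gt0 y_gt0 l_gt0 eq_xy eq_profiles [[M [trM costM]] minM].
rewrite /is_dF ql in trM minM *.
have eq_cost M1 M2 : traversal (size x) l M1 -> traversal (size y) l M2 ->
    profile x l M1 = profile y l M2 -> trav_cost x q M1 = trav_cost y q M2.
  move=> trM1 trM2 /(eq_profile_sector_extrema eq_xy trM1 trM2 x_gt0 y_gt0 l_gt0).
  exact: eq_trav_cost.
split.
  have [M' [trM' eq_prof]] : profiles y l (profile x l M) by apply/eq_profiles; exists M.
  by exists M'; rewrite -costM (eq_cost M M').
move=> M' trM'.
have [M1 [trM1 eq_prof]] : profiles x l (profile y l M') by apply/eq_profiles; exists M'.
by rewrite -(eq_cost M1 M') //; apply: minM.
Qed.

End FrechetDistance.

Lemma finite_bounded_witness (K : finType) (good : K -> nat -> Prop) :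
  exists N, forall k, (exists n, good k n) -> exists2 n, n <= N & good k n.
Proof.
suff [N HN] : exists N, forall k, k \in enum K ->
    (exists n, good k n) -> exists2 n, n <= N & good k n.
  by exists N => k; apply: HN; rewrite mem_enum.
elim: (enum K) => [|k0 s [N IH]]; first by exists 0.
have [[n0 good0]|no_good0] := EM (exists n, good k0 n).
  exists (maxn n0 N) => k; rewrite inE => /predU1P[-> _|ks /(IH k ks)[n le_nN goodn]].
    by exists n0; rewrite ?leq_maxl.
  by exists n; rewrite ?(leq_trans le_nN) ?leq_maxr.
by exists N => k; rewrite inE => /predU1P[-> /no_good0 []|/IH].
Qed.

Definition pad_head k (w : seq nat) := nseq k (head 0 w) ++ w.

Lemma size_pad_head k w : size (pad_head k w) = k + size w.
Proof. by rewrite size_cat size_nseq. Qed.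

Lemma mem_pad_head k w : 0 < size w -> pad_head k w =i w.
Proof.
case: w => // v w _ z; rewrite mem_cat mem_nseq inE /=.
by case: (z == v); rewrite ?andbF ?andbT ?orbT.
Qed.

Lemma code_profiles_pad_head k w l P : 0 < size w ->
  code_profiles (pad_head k w) l P <-> code_profiles w l P.
Proof.
move=> w_gt0; elim: k => [//|k IH].
have -> : pad_head k.+1 w = head 0 (pad_head k w) :: pad_head k w.
  by rewrite /pad_head /=; case: k {IH} => //=; case: (w) w_gt0.
by rewrite code_profiles_cons_head // size_pad_head addn_gt0 w_gt0 orbT.
Qed.

Section CodeKeys.
Variables r l : nat.

Definition tuple_seq (t : l.-tuple ('I_r.+1 * 'I_r.+1)) : seq (nat * nat) :=
  [seq (nat_of_ord p.1, nat_of_ord p.2) | p <- t].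

Definition code_key w :=
  ([set t | `[< code_profiles w l (tuple_seq t) >]], [set i : 'I_r.+1 | (i : nat) \in w]).

Lemma code_profile_tuple w M : all (leq^~ r) w -> exists t, tuple_seq t = code_profile w l M.
Proof.
move=> w_le; have sector_le j : all (leq^~ r) (seq_sector 0 w M j).
  apply/allP => z /seq_sectorP[p _ /andP[_ /eqP ->]].
  case: (ltnP p.1 (size w)) => [lt_p1|le_p1]; last by rewrite nth_default.
  by apply: (allP w_le); rewrite mem_nth.
have seq_min_le j : seq_min 0 (seq_sector 0 w M j) <= r.
  have := sector_le j; case: (seq_sector 0 w M j) => // a s /allP; apply.
  exact: seq_min_mem.
have seq_max_le j : seq_max 0 (seq_sector 0 w M j) <= r.
  have := sector_le j; case: (seq_sector 0 w M j) => // a s /allP; apply.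
  exact: seq_max_mem.
pose t := [seq (inord p.1, inord p.2) : 'I_r.+1 * 'I_r.+1 | p <- code_profile w l M].
have size_t : size t == l by rewrite !size_map size_iota.
exists (Tuple size_t); rewrite /tuple_seq /= -map_comp -[RHS]map_id.
by apply/eq_in_map => p /mapP[j _ ->]; rewrite /= !inordK ?ltnS.
Qed.

Lemma code_key_profiles w1 w2 P : all (leq^~ r) w1 -> code_key w1 = code_key w2 ->
  code_profiles w1 l P -> code_profiles w2 l P.
Proof.
move=> w1_le [eq_key _] P1; have [M [_ P_def]] := P1.
have [t t_def] := code_profile_tuple M w1_le.
have : t \in [set t | `[< code_profiles w1 l (tuple_seq t) >]].
  by rewrite inE; apply/asboolP; rewrite t_def -P_def.
by rewrite eq_key inE t_def -P_def => /asboolP.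
Qed.

Lemma code_key_subset w1 w2 : all (leq^~ r) w1 -> code_key w1 = code_key w2 ->
  {subset w1 <= w2}.
Proof.
move=> /allP w1_le [_ eq_key] k kw1.
have : inord k \in [set i : 'I_r.+1 | (i : nat) \in w1] by rewrite inE inordK ?ltnS ?w1_le.
by rewrite eq_key inE inordK ?ltnS ?w1_le.
Qed.

End CodeKeys.

Lemma short_code_exists r l : exists N, forall w, 0 < size w -> all (leq^~ r) w ->
  exists2 w', size w' = N & w' =i w /\ forall P, code_profiles w' l P <-> code_profiles w l P.
Proof.
pose good k n := exists2 w, size w = n & all (leq^~ r) w /\ code_key r l w = k.
have [N HN] := finite_bounded_witness good.
exists N => w w_gt0 w_le.
have [|n le_nN [w0 size_w0 [w0_le key_w0]]] := HN (code_key r l w).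
  by exists (size w), w.
have eq_w0 : w0 =i w.
  move=> k; apply/idP/idP => kw; first exact: (code_key_subset w0_le key_w0 kw).
  exact: (code_key_subset w_le (esym key_w0) kw).
have w0_gt0 : 0 < size w0 by rewrite -has_predT (eq_has_r eq_w0) has_predT.
exists (pad_head (N - n) w0); first by rewrite size_pad_head size_w0 subnK.
split=> [k|P]; first by rewrite mem_pad_head.
rewrite code_profiles_pad_head //.
split; first exact: code_key_profiles w0_le key_w0.
exact: code_key_profiles w_le (esym key_w0).
Qed.

Local Open Scope ring_scope.

Theorem lemma4p6 :
  exists f : nat -> nat -> nat,
    forall (m r : nat) (x : m.-tuple R) (l : nat),
      (0 < m)%N -> (0 < l)%N -> (size (tset x) <= r)%N ->
      exists y : (f r l).-tuple R,
        (forall P, profiles y l P <-> profiles x l P) /\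
        (tset x =i tset y) /\
        (forall (q : l.-tuple R) (d : R), is_dF x q d <-> is_dF y q d).
Proof.
pose f r l := sval (cid (short_code_exists r l)).
exists f => m r x l m_gt0 l_gt0 tset_le_r.
have x_gt0 : (0 < size x)%N by rewrite size_tuple.
have code_gt0 : (0 < size (rank_code x))%N by rewrite size_map.
have code_le : all (leq^~ r) (rank_code x).
  by apply/allP => k /rank_code_le /leq_trans; apply.
have [w size_w [eq_w eq_profiles_w]] := svalP (cid (short_code_exists r l)) _ code_gt0 code_le.
have size_y : size (decode x w) == f r l by rewrite size_map size_w.
pose y := Tuple size_y.
have y_gt0 : (0 < size y)%N by rewrite size_map -has_predT (eq_has_r eq_w) has_predT.
have eq_tset : tset x =i tset y by move=> z; rewrite tset_decode.
have eq_profiles P : profiles y l P <-> profiles x l P.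
  by rewrite !profiles_rank_code // rank_code_decode.
exists y; split=> //; split=> // q d; have size_q := size_tuple q.
split; apply: (is_dF_transfer size_q) => //.
by move=> P; split=> /eq_profiles.
Qed.
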